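(* Let $G$ be a finitely generated group and $(X,\mathcal{U})$ a uniform space. If $\Phi\in Act(G,X)$ is topologically stable, then it is $\mu$-topologically stable for any non-atomic Borel measure $\mu$ on $X$.
   Context: $D[x]=\{y:(x,y)\in D\}$. $Act(G,X)$: maps $\Phi:G\times X\to X$ with each $\Phi_g$ a uniform equivalence, $\Phi_e=\mathrm{id}$, $\Phi_{g_1g_2}=\Phi_{g_1}\circ\Phi_{g_2}$. Generating sets are finite symmetric. Non-atomic: $\mu(\{x\})=0$ for all $x$. $\Phi$ is topologically stable if for some generating set $S$: for every $E\in\mathcal{U}$ there is $D\in\mathcal{U}$ such that whenever $\Psi\in Act(G,X)$ satisfies $(\Psi_s(x),\Phi_s(x))\in D$ for all $x\in X,s\in S$, there is a continuous $f:X\to X$ with $\Phi_g\circ f=f\circ\Psi_g$ for all $g$ and $(x,f(x))\in E$ for all $x$. For set-valued $H:X\to\mathcal{P}(X)$: $Dom(H)=\{x:H(x)\neq\emptyset\}$; $(Id,H)\in E$ means $H(x)\subset E[x]$ for all $x$; $H$ is upper semi-continuous if for each $x\in Dom(H)$ and open $O\supset H(x)$ there is $D\in\mathcal{U}$ with $H(y)\subset O$ whenever $(x,y)\in D$. $\Phi$ is $\mu$-topologically stable if for some generating set $S$: for every $E\in\mathcal{U}$ there is $D\in\mathcal{U}$ such that whenever $\Psi\in Act(G,X)$ satisfies $(\Psi_s(x),\Phi_s(x))\in D$ for all $x,s\in S$, there is an upper semi-continuous compact-valued $H$ with measurable domain such that $\mu(X\setminus Dom(H))=0$, $\mu(H(x))=0$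 for all $x$, $(Id,H)\in E$, and $\Phi_g(H(x))=H(\Psi_g(x))$ for all $g,x$. *)

From HB Require Import structures.
From mathcomp Require Import all_boot all_order all_algebra.
From mathcomp Require Import monoid.
From mathcomp Require Import all_classical all_reals all_analysis.

Set Implicit Arguments.
Unset Strict Implicit.
Unset Printing Implicit Defensive.

Import Order.TTheory GRing.Theory Num.Theory.
Local Open Scope ring_scope.
Local Open Scope classical_set_scope.

Definition usection {X : Type} (D : set (X * X)) (x : X) : set X :=
  [set y | D (x, y)].

Definition uniform_equiv {X : uniformType} (f : X -> X) : Prop :=
  exists g : X -> X,
    [/\ cancel f g, cancel g f, unif_continuous f & unif_continuous g].

Definition is_action {G : groupType} {X : uniformType} (Phi : G -> X -> X)
  : Prop :=
  [/\ (forall g, uniform_equiv (Phi g)),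
      Phi (@monoid.one G) = id &
      (forall g1 g2, Phi (@monoid.mul G g1 g2) = Phi g1 \o Phi g2)].

(* S (a finite list) is a finite symmetric generating set of G:
   closed under inverses, and every element of G is a finite product of
   elements of S (the empty product being the identity). *)
Definition generating_set {G : groupType} (S : seq G) : Prop :=
  (forall s, s \in S -> @monoid.inv G s \in S) /\
  (forall g : G, exists l : seq G,
      all (fun s => s \in S) l /\ g = foldr (@monoid.mul G) (@monoid.one G) l).

Definition finitely_generated (G : groupType) : Prop :=
  exists S : seq G, generating_set S.

Definition topologically_stable {G : groupType} {X : uniformType}
  (Phi : G -> X -> X) : Prop :=
  exists S : seq G, generating_set S /\
  forall E, entourage E -> exists D, entourage D /\
    forall Psi : G -> X -> X, is_action Psi ->
      (forall x s, s \in S -> D (Psi s x, Phi s x)) ->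
      exists f : X -> X,
        [/\ continuous f,
            (forall g, Phi g \o f = f \o Psi g) &
            (forall x, E (x, f x))].

Definition Dom {X : Type} (H : X -> set X) : set X := [set x | H x !=set0].

Definition upper_semicontinuous {X : uniformType} (H : X -> set X) : Prop :=
  forall x, Dom H x -> forall O : set X, open O -> H x `<=` O ->
    exists D, entourage D /\ forall y, D (x, y) -> H y `<=` O.

Definition borel (X : puniformType) := g_sigma_algebraType (@open X).

Definition nonatomic {R : realType} {X : puniformType}
  (mu : {measure set (borel X) -> \bar R}) : Prop :=
  forall x : X, mu [set x] = 0%E.

Definition mu_topologically_stable {R : realType} {G : groupType}
  {X : puniformType} (mu : {measure set (borel X) -> \bar R})
  (Phi : G -> X -> X) : Prop :=
  exists S : seq G, generating_set S /\
  forall E, entourage E -> exists D, entourage D /\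
    forall Psi : G -> X -> X, is_action Psi ->
      (forall x s, s \in S -> D (Psi s x, Phi s x)) ->
      exists H : X -> set X,
        upper_semicontinuous H /\
        (forall x, compact (H x)) /\
        measurable (Dom H : set (borel X)) /\
        mu (~` Dom H) = 0%E /\
        (forall x, mu (H x) = 0%E) /\
        (forall x, H x `<=` usection E x) /\
        (forall g x, Phi g @` H x = H (Psi g x)).

(* Topological stability yields, for each perturbation Psi, a continuous
   semiconjugacy f with Phi g \o f = f \o Psi g that is E-close to the identity.
   The point-valued map x |-> {f x} is then an admissible H: it is upper
   semi-continuous because f is continuous, its values are compact singletons,
   its domain is all of X, and a non-atomic measure gives every singleton
   measure zero. *)
From HB Require Import structures.
From mathcomp Require Import all_boot all_order all_algebra.
From mathcomp Require Import monoid.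
From mathcomp Require Import all_classical all_reals all_analysis.

Set Implicit Arguments.
Unset Strict Implicit.
Unset Printing Implicit Defensive.

Local Open Scope ring_scope.
Local Open Scope classical_set_scope.

Lemma Dom_set1 (T : Type) (f : T -> T) : Dom (fun x => [set f x]) = setT.
Proof. by apply/seteqP; split => // x _; exists (f x). Qed.

Lemma continuous_usc_set1 (X : uniformType) (f : X -> X) :
  continuous f -> upper_semicontinuous (fun x => [set f x]).
Proof.
move=> fc x _ O oO fxO.
have /nbhsP[D entD DO] : nbhs x (f @^-1` O).
  by apply: fc; apply: open_nbhs_nbhs; split => //; exact: fxO.
exists D; split => // y Dxy _ ->; apply: DO.
by rewrite /xsection /=; exact: mem_set.
Qed.

Lemma semiconj_image_set1 (T : Type) (phi psi f : T -> T) (x : T) :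
  phi \o f = f \o psi -> phi @` [set f x] = [set f (psi x)].
Proof. by move=> comm; rewrite image_set1 -[phi (f x)]/((phi \o f) x) comm. Qed.

Theorem theorem3p11 (G : groupType) (X : puniformType) (Phi : G -> X -> X) :
  finitely_generated G -> is_action Phi -> topologically_stable Phi ->
  forall (R : realType) (mu : {measure set (borel X) -> \bar R}),
    nonatomic mu -> mu_topologically_stable mu Phi.
Proof.
move=> _ _ [S [genS stable]] R mu nonatom.
exists S; split => // E entE.
have [D [entD shadow]] := stable E entE.
exists D; split => // Psi actPsi closePsi.
have [f [fc fcomm fE]] := shadow Psi actPsi closePsi.
exists (fun x => [set f x]); rewrite Dom_set1.
split; first exact: continuous_usc_set1.
split; first by move=> x; exact: compact_set1.
split; first exact: measurableT.
split; first by rewrite setCT measure0.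
split; first by move=> x; exact: nonatom.
split; first by move=> x y ->; exact: fE.
by move=> g x; exact: semiconj_image_set1 (fcomm g).
Qed.
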